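(* Let $(K,W)$ be either $(K^+_{m,n},W^+_{m,n})$ or $(K_{m,n},W_{m,n})$, let $P$ be a simple $K$-module and $\lambda\in\mathbb{C}^n$. Then: (1) $\sigma_\lambda^2=0$ on $F(P,M(\lambda))$; (2) for $r\in\{0,\dots,m\}$ (with $\lambda=\mathbf{0}$ if $r\neq m$), $\sigma_\lambda(F(P,L(V(r)\otimes N(\lambda))))=0$ if and only if $(r;\lambda)=(m;(-1,\dots,-1))$.
   Context: All vector spaces are over $\mathbb{C}$; modules are $\mathbb{Z}_2$-graded, simple means no graded submodules other than $0$ and itself. Fix $m,n\in\mathbb{Z}_{\ge0}$, not both zero. $A^+_{m,n}=\mathbb{C}[t_1,\dots,t_m]\otimes\Lambda(\xi_1,\dots,\xi_n)$, $A_{m,n}=\mathbb{C}[t_1^{\pm1},\dots,t_m^{\pm1}]\otimes\Lambda(\xi_1,\dots,\xi_n)$ ($t_i$ even, $\xi_j$ odd). $W^+_{m,n}$ (resp. $W_{m,n}$) is the Lie superalgebra of super-derivations of $A^+_{m,n}$ (resp. $A_{m,n}$); $K^+_{m,n}$ (resp. $K_{m,n}$) is the super Weyl algebra of operators on $A^+_{m,n}$ (resp. $A_{m,n}$) generated by multiplication by $t_i$ (resp. $t_i^{\pm1}$), $\xi_j$ and by $\partial_{t_i}=\partial/\partial t_i$, $\partial_{\xi_j}=\partial/\partial\xi_j$. $\mathfrak{gl}(m,n)$ has matrix units $E_{a,b}$, even part $\mathfrak{gl}(m,n)_0=\mathfrak{gl}_m\oplus\mathfrak{gl}_n$ ($\mathfrak{gl}_m=\mathrm{span}\{E_{i,k}:i,k\le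 m\}$, $\mathfrak{gl}_n\cong\mathrm{span}\{E_{m+l,m+j}\}$ via $E_{l,j}\mapsto E_{m+l,m+j}$), odd part spanned by $E_{i,m+j},E_{m+j,i}$. There is a Lie superalgebra homomorphism $\pi:W\to K\otimes U(\mathfrak{gl}(m,n))$ with $\pi(t^\alpha\xi_I\partial_{t_i})=t^\alpha\xi_I\partial_{t_i}\otimes1+\sum_{s=1}^m\partial_{t_s}(t^\alpha\xi_I)\otimes E_{s,i}+(-1)^{|I|-1}\sum_{l=1}^n\partial_{\xi_l}(t^\alpha\xi_I)\otimes E_{m+l,i}$, $\pi(t^\alpha\xi_I\partial_{\xi_j})=t^\alpha\xi_I\partial_{\xi_j}\otimes1+\sum_{s=1}^m\partial_{t_s}(t^\alpha\xi_I)\otimes E_{s,m+j}+(-1)^{|I|-1}\sum_{l=1}^n\partial_{\xi_l}(t^\alpha\xi_I)\otimes E_{m+l,m+j}$ (here $t^\alpha$ with $\alpha\in\mathbb{Z}_{\ge0}^m$ resp. $\mathbb{Z}^m$, $\xi_I$ the increasing product over $I\subset\{1,\dots,n\}$, and derivatives of $t^\alpha\xi_I$ are multiplication operators), and for a $K$-module $P$ and a $\mathfrak{gl}(m,n)$-module $M$, $F(P,M)=P\otimes M$ is a $W$-module via $x\cdot(u\otimes v)=\pi(x)(u\otimes v)$, $(a\otimes b)(u\otimes v)=(-1)^{|b||u|}au\otimes bv$. For $\lambda\in\mathbb{C}^n$: $e_1,\dots,e_n$ standard basis of $\mathbb{Z}^n$, $|\mu|=\sum_j\mu_j$, $\mathbf{0}=(0,\dots,0)$;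 $S(\lambda)=X_1\times\dots\times X_n$ with $X_j=\lambda_j+\mathbb{Z}$ if $\lambda_j\notin\mathbb{Z}$, $X_j=\mathbb{Z}_{\ge0}$ if $\lambda_j\in\mathbb{Z}_{\ge0}$, $X_j=\{-1,-2,\dots\}$ if $\lambda_j\in\{-1,-2,\dots\}$; $W(\lambda)$ has basis $\{y(\lambda'):\lambda'\in S(\lambda)\}$, $y(\mu)=0$ for $\mu\notin S(\lambda)$, $\mathfrak{gl}_n$ acting by $E_{l,j}y(\lambda')=\lambda'_jy(\lambda'-e_j+e_l)$. $V(r)=\Lambda^r(\mathbb{C}^m)$ with natural $\mathfrak{gl}_m$-action ($e_1,\dots,e_m$ standard basis of $\mathbb{C}^m$). $M(\lambda)=\bigoplus_{r=0}^mV(r)\otimes W(\lambda)$, spanned by $e_{i_1}\wedge\dots\wedge e_{i_r}y(\lambda')$, with parity $|\lambda-\lambda'|\bmod 2$; it is a $\mathfrak{gl}(m,n)$-module with $\mathfrak{gl}(m,n)_0$ acting by tensor product and $E_{i,m+j}\cdot e_{i_1}\wedge\dots\wedge e_{i_r}y(\lambda')=(-1)^r\lambda'_je_i\wedge e_{i_1}\wedge\dots\wedge e_{i_r}y(\lambda'-e_j)$, $E_{m+j,i}\cdot e_{i_1}\wedge\dots\wedge e_{i_r}y(\lambda')=0$ if $i\notin\{i_1,\dots,i_r\}$ and $=(-1)^{r-s}e_{i_1}\wedge\dots\wedge\widehat{e_{i_s}}\wedge\dots\wedge e_{i_r}y(\lambda'+e_j)$ if $i=i_s$. Notation: $L(V(m)\otimes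 N(\lambda))$ denotes the $\mathfrak{gl}(m,n)$-submodule $\mathrm{span}\{e_{i_1}\wedge\dots\wedge e_{i_r}y(\lambda'):0\le r\le m,\ \lambda'\in S(\lambda),\ m+|\lambda|=r+|\lambda'|\}$ of $M(\lambda)$, and for $r\in\{0,\dots,m\}$, $L(V(r)\otimes N(\mathbf{0}))$ denotes the submodule $\mathrm{span}\{e_{i_1}\wedge\dots\wedge e_{i_{r'}}y(\alpha):0\le r'\le r,\ \alpha\in\mathbb{Z}_{\ge0}^n,\ r=r'+|\alpha|\}$ of $M(\mathbf{0})$ (these are simple modules isomorphic to the simple tops of the corresponding Kac modules). Define operators on $M(\lambda)$: $e_i\wedge(e_{i_1}\wedge\dots\wedge e_{i_r}y(\lambda'))=e_i\wedge e_{i_1}\wedge\dots\wedge e_{i_r}y(\lambda')$ and $\tau_j(e_{i_1}\wedge\dots\wedge e_{i_r}y(\lambda'))=(-1)^re_{i_1}\wedge\dots\wedge e_{i_r}y(\lambda'+e_j)$. Define $\sigma_\lambda:F(P,M(\lambda))\to F(P,M(\lambda))$ by $\sigma_\lambda(u\otimes v)=\sum_{s=1}^m\partial_{t_s}u\otimes e_s\wedge v+(-1)^{|u|-1}\sum_{l=1}^n\partial_{\xi_l}u\otimes\tau_l(v)$. *)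

From HB Require Import structures.
From mathcomp Require Import all_boot all_order all_algebra.
From mathcomp Require Import boolp reals complex.
Set Implicit Arguments. Unset Strict Implicit. Unset Printing Implicit Defensive.
Import Order.TTheory GRing.Theory Num.Theory.
Local Open Scope ring_scope.

Section Defs.
Variables (R : realType) (m n : nat).
Local Notation C := (R[i]).

Definition isIntC (x : C) : Prop := exists z : int, x = z%:~R.
Definition isNatC (x : C) : Prop := exists k : nat, x = k%:R.
Definition isNegIntC (x : C) : Prop := exists k : nat, x = - (k.+1)%:R.

Definition in_S (lam lam' : {ffun 'I_n -> C}) : Prop :=
  forall j : 'I_n,
    (~ isIntC (lam j) /\ isIntC (lam' j - lam j))
    \/ (isNatC (lam j) /\ isNatC (lam' j))
    \/ (isNegIntC (lam j) /\ isNegIntC (lam' j)).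

(* Basis labels of M(lam): e_{i_1} /\ ... /\ e_{i_r} y(lam') with
   i_1 < ... < i_r is labelled by (I, lam') with I = {i_1,...,i_r}.
   Labels with lam' \notin S(lam) stand for y(lam') = 0. *)
Definition basis := ({set 'I_m} * {ffun 'I_n -> C})%type.

Definition validb (lam : {ffun 'I_n -> C}) (b : basis) : bool :=
  `[< in_S lam b.2 >].

Definition unitv (l : 'I_n) : {ffun 'I_n -> C} := [ffun j => (j == l)%:R].

(* An operator-level description of a (Z2-graded) module over
   K^+_{m,n} (laurent = false) or K_{m,n} (laurent = true):
   par0 = projection onto the even part, tm i = t_i, tinv i = t_i^{-1}
   (only relevant when laurent = true), dt i = d/dt_i, xi j = xi_j,
   dxi j = d/dxi_j. *)
Record Kdata (P : Type) := KData {
  par0 : P -> P;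
  tm : 'I_m -> P -> P;
  tinv : 'I_m -> P -> P;
  dt : 'I_m -> P -> P;
  xi : 'I_n -> P -> P;
  dxi : 'I_n -> P -> P }.

Definition lin_op (P : lmodType C) (f : P -> P) : Prop :=
  forall (a : C) (u v : P), f (a *: u + v) = a *: f u + f v.

Definition even_op (P : lmodType C) (p0 f : P -> P) : Prop :=
  forall u, p0 (f u) = f (p0 u).
Definition odd_op (P : lmodType C) (p0 f : P -> P) : Prop :=
  forall u, p0 (f u) = f (u - p0 u).

Definition is_Kmodule (laurent : bool) (P : lmodType C) (D : Kdata P) : Prop :=
  [/\
      lin_op (par0 D) /\
      (forall i, lin_op (tm D i) /\ lin_op (tinv D i) /\ lin_op (dt D i)) /\
      (forall j, lin_op (xi D j) /\ lin_op (dxi D j)),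
      (forall u, par0 D (par0 D u) = par0 D u) /\
      (forall i, even_op (par0 D) (tm D i) /\ even_op (par0 D) (dt D i) /\
                 (laurent -> even_op (par0 D) (tinv D i))) /\
      (forall j, odd_op (par0 D) (xi D j) /\ odd_op (par0 D) (dxi D j)),
      (forall i k u,
          tm D i (tm D k u) = tm D k (tm D i u) /\
          dt D i (dt D k u) = dt D k (dt D i u) /\
          dt D i (tm D k u) - tm D k (dt D i u) = (i == k)%:R *: u),
      (forall j k u,
          xi D j (xi D k u) = - xi D k (xi D j u) /\
          dxi D j (dxi D k u) = - dxi D k (dxi D j u) /\
          dxi D j (xi D k u) + xi D k (dxi D j u) = (j == k)%:R *: u)
    &
      (forall i j u,
          tm D i (xi D j u) = xi D j (tm D i u) /\
          tm D i (dxi D j u) = dxi D j (tm D i u) /\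
          dt D i (xi D j u) = xi D j (dt D i u) /\
          dt D i (dxi D j u) = dxi D j (dt D i u)) /\
      (laurent -> forall i u,
          tm D i (tinv D i u) = u /\ tinv D i (tm D i u) = u)].

Definition graded_submodule (laurent : bool) (P : lmodType C) (D : Kdata P)
    (S : P -> Prop) : Prop :=
  [/\ S 0,
      (forall (a : C) u v, S u -> S v -> S (a *: u + v)),
      (forall u, S u -> S (par0 D u)),
      (forall i u, S u -> S (tm D i u) /\ S (dt D i u) /\
                          (laurent -> S (tinv D i u)))
    & (forall j u, S u -> S (xi D j u) /\ S (dxi D j u))].

Definition simple_Kmodule (laurent : bool) (P : lmodType C) (D : Kdata P) : Prop :=
  [/\ is_Kmodule laurent D,
      (exists u : P, u != 0)
    & forall S, graded_submodule laurent D S ->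
        (forall u, S u) \/ (forall u, S u -> u = 0)].

(* An element of P (x) M(lam) is represented as a formal finite sum
   \sum_k u_k (x) b_k, i.e. a list of pairs (u_k, b_k). *)
Section Tensor.
Variables (P : lmodType C) (D : Kdata P) (lam : {ffun 'I_n -> C}).

Definition tzero (s : seq (P * basis)) : Prop :=
  forall b : basis, validb lam b -> \sum_(x <- s | x.2 == b) x.1 = 0.

Definition hcomp (p : bool) (u : P) : P := if p then u - par0 D u else par0 D u.

(* e_s /\ (e_I y(lam')) = wedge_coef s I * e_{I u {s}} y(lam') *)
Definition wedge_coef (s : 'I_m) (I : {set 'I_m}) : C :=
  if s \in I then 0 else (-1) ^+ #|[set i in I | (i < s)%N]|.

(* sigma_lam on a pure tensor u (x) b, b = (I, lam'), written out for the
   homogeneous components of u (|u| = p):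
   sum_s d_{t_s} u (x) e_s /\ b
   + (-1)^{p-1} sum_l d_{xi_l} u (x) tau_l(b),
   tau_l(e_I y(lam')) = (-1)^{|I|} e_I y(lam' + e_l). *)
Definition sigma_pure (x : P * basis) : seq (P * basis) :=
  let u := x.1 in let I := x.2.1 in let mu := x.2.2 in
  [seq (wedge_coef s I *: dt D s u, (s |: I, mu)) | s <- enum 'I_m]
  ++ [seq (((if p then 1 else -1) * (-1) ^+ #|I|) *: dxi D l (hcomp p u),
           (I, [ffun j => mu j + unitv l j])) | l <- enum 'I_n,
                                                p <- [:: false; true]].

(* linear extension; terms y(mu) with mu \notin S(lam) are 0 *)
Definition sigma (s : seq (P * basis)) : seq (P * basis) :=
  flatten [seq sigma_pure x | x <- s & validb lam x.2].

End Tensor.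

(* for r = m: span{e_I y(lam') : lam' \in S(lam), m + |lam| = |I| + |lam'|};
   for r < m (where lam = 0): span{e_I y(alpha) : alpha \in N^n, r = |I| + |alpha|} *)
Definition inL (r : nat) (lam : {ffun 'I_n -> C}) (b : basis) : Prop :=
  if r == m then
    in_S lam b.2 /\
    (m%:R + \sum_j lam j = (#|b.1|)%:R + \sum_j b.2 j :> C)
  else
    exists alpha : 'I_n -> nat,
      (forall j, b.2 j = (alpha j)%:R) /\ r = (#|b.1| + \sum_j alpha j)%N.

End Defs.

From HB Require Import structures.
From mathcomp Require Import all_boot all_order all_algebra.
From mathcomp Require Import boolp reals complex.
Import Order.TTheory GRing.Theory Num.Theory.
Local Open Scope ring_scope.
Set Implicit Arguments. Unset Strict Implicit. Unset Printing Implicit Defensive.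

(* Write sigma_lambda = T + X, where T wedges with e_s and applies d_(t_s), and
   X raises lambda'_l by one and applies d_(xi_l), with the sign (-1)^(|u|-1)
   from u and (-1)^r from tau_l.  Then T^2 = 0 because wedging anticommutes
   while the d_t commute; X^2 = 0 because the d_xi anticommute while the
   shifts commute (if lambda' + e_l + e_l' lies in S(lambda) with l <> l', so
   does lambda' + e_l, hence the convention y(mu) = 0 loses no term); and
   TX + XT = 0 because T raises r by one, flipping (-1)^r, and d_t is even.
   For (2): every basis vector of L(V(m) (x) N(-1,...,-1)) is
   e_1 /\ ... /\ e_m y(-1,...,-1), killed by T for degree reasons and sent out
   of S(lambda) by X.  In every other case one pure tensor has a coefficient
   +-d_(xi_l) u (r = m, lambda_l <> -1) or +-d_(t_s) u (r < m, s outside a set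
   I of size r) in its image, and these cannot vanish for all u since
   [d_t, t] = 1 and [d_xi, xi] = 1 on P <> 0. *)

Section AntisymmetricSums.
Variables (F : numFieldType) (V : lmodType F).

Lemma eq_oppv_eq0 (u : V) : u = - u -> u = 0.
Proof.
move=> uN; have nz2 : (2%:R : F) != 0 by rewrite pnatr_eq0.
by apply: (scalerI nz2); rewrite scaler0 scaler_nat mulr2n {2}uN subrr.
Qed.

Lemma sum_antisym_eq0 (T : Type) (r : seq T) (G : T -> T -> V) :
  (forall i j, G j i = - G i j) -> \sum_(i <- r) \sum_(j <- r) G i j = 0.
Proof.
move=> Ganti; apply: eq_oppv_eq0.
rewrite {1}exchange_big -sumrN; apply: eq_bigr => j _.
by rewrite -sumrN; apply: eq_bigr => i _; rewrite Ganti.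
Qed.

End AntisymmetricSums.

Lemma setU1_eq_notin (T : finType) (I : {set T}) (a b : T) :
  b \notin I -> (a |: I == b |: I) = (a == b).
Proof.
move=> bI; apply/eqP/eqP => [abI|-> //].
have : b \in a |: I by rewrite abI setU11.
by rewrite in_setU1 (negbTE bI) orbF => /eqP.
Qed.

Section LinearOperators.
Variables (R : realType) (P : lmodType R[i]) (f : P -> P).
Hypothesis flin : lin_op f.

Lemma lin_op0 : f 0 = 0.
Proof.
have := flin 1 0 0; rewrite !scale1r addr0 => f0D.
by apply: (@addrI _ (f 0)); rewrite addr0 -f0D.
Qed.

Lemma lin_opZ a u : f (a *: u) = a *: f u.
Proof. by have := flin a u 0; rewrite lin_op0 !addr0 => ->. Qed.

Lemma lin_opD u v : f (u + v) = f u + f v.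
Proof. by have := flin 1 u v; rewrite !scale1r => ->. Qed.

Lemma lin_opN u : f (- u) = - f u.
Proof. by rewrite -scaleN1r lin_opZ scaleN1r. Qed.

Lemma lin_opB u v : f (u - v) = f u - f v.
Proof. by rewrite lin_opD lin_opN. Qed.

End LinearOperators.

Section WeylModule.
Variables (R : realType) (m n : nat) (laurent : bool) (P : lmodType R[i]).
Variable D : Kdata m n P.
Hypothesis HK : is_Kmodule laurent D.

Lemma lin_par0 : lin_op (par0 D).
Proof. by case: HK => [[]]. Qed.
Lemma lin_tm i : lin_op (tm D i).
Proof. by case: HK => [[_ [/(_ i) [? _] _]]]. Qed.
Lemma lin_dt i : lin_op (dt D i).
Proof. by case: HK => [[_ [/(_ i) [_ [_ ?]] _]]]. Qed.
Lemma lin_xi j : lin_op (xi D j).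
Proof. by case: HK => [[_ [_ /(_ j) [? _]]]]. Qed.
Lemma lin_dxi j : lin_op (dxi D j).
Proof. by case: HK => [[_ [_ /(_ j) [_ ?]]]]. Qed.

Lemma par0_idem u : par0 D (par0 D u) = par0 D u.
Proof. by case: HK => _ [+ _] _ _ _; apply. Qed.
Lemma par0_dt i u : par0 D (dt D i u) = dt D i (par0 D u).
Proof. by case: HK => _ [_ [/(_ i) [_ [+ _]] _]] _ _ _; apply. Qed.
Lemma par0_dxi j u : par0 D (dxi D j u) = dxi D j (u - par0 D u).
Proof. by case: HK => _ [_ [_ /(_ j) [_ +]]] _ _ _; apply. Qed.

Lemma dt_comm i k u : dt D i (dt D k u) = dt D k (dt D i u).
Proof. by case: HK => _ _ /(_ i k u) [_ [+ _]] _ _. Qed.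
Lemma dt_tm i u : dt D i (tm D i u) - tm D i (dt D i u) = u.
Proof. by case: HK => _ _ /(_ i i u) [_ [_ ->]] _ _; rewrite eqxx scale1r. Qed.
Lemma dxi_anticomm j k u : dxi D j (dxi D k u) = - dxi D k (dxi D j u).
Proof. by case: HK => _ _ _ /(_ j k u) [_ [+ _]] _. Qed.
Lemma dxi_xi j u : dxi D j (xi D j u) + xi D j (dxi D j u) = u.
Proof. by case: HK => _ _ _ /(_ j j u) [_ [_ ->]] _; rewrite eqxx scale1r. Qed.
Lemma dt_dxi i j u : dt D i (dxi D j u) = dxi D j (dt D i u).
Proof. by case: HK => _ _ _ _ [/(_ i j u) [_ [_ [_ ->]]] _]. Qed.

Lemma dxi_dxi j u : dxi D j (dxi D j u) = 0.
Proof. by apply: eq_oppv_eq0; rewrite {1}dxi_anticomm. Qed.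

(* [twist u] is [u_odd - u_even], i.e. [(-1)^(|u|-1) u] on homogeneous [u]:
   the sign in front of the d_xi-part of sigma_lambda. *)
Definition twist u := u - par0 D u - par0 D u.

Lemma twistD u v : twist (u + v) = twist u + twist v.
Proof. by rewrite /twist (lin_opD lin_par0) opprD [u + v + _]addrACA [LHS]addrACA. Qed.

Lemma twistZ a u : twist (a *: u) = a *: twist u.
Proof. by rewrite /twist (lin_opZ lin_par0) !scalerBr. Qed.

Lemma twistK u : twist (twist u) = u.
Proof.
have par0_twist : par0 D (twist u) = - par0 D u.
  by rewrite /twist !(lin_opB lin_par0) par0_idem subrr sub0r.
by rewrite {1}/twist par0_twist opprK /twist !subrK.
Qed.

Lemma twist_dt i u : twist (dt D i u) = dt D i (twist u).
Proof. by rewrite /twist !(lin_opB (lin_dt i)) par0_dt. Qed.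

Lemma twist_dxi j u : twist (dxi D j u) = - dxi D j (twist u).
Proof. by rewrite /twist par0_dxi !(lin_opB (lin_dxi j)) !opprB subrKC. Qed.

Lemma exists_dt_neq0 i : (exists w : P, w != 0) -> exists u, dt D i u != 0.
Proof.
case=> w w_neq0; have [dtw0|] := eqVneq (dt D i w) 0; last by exists w.
by exists (tm D i w); apply: contraNneq w_neq0 => dtw_eq0;
  rewrite -(dt_tm i w) dtw_eq0 dtw0 (lin_op0 (lin_tm i)) subr0.
Qed.

Lemma exists_dxi_twist_neq0 j : (exists w : P, w != 0) ->
  exists u, dxi D j (twist u) != 0.
Proof.
case=> w w_neq0; suff [v dxiv_neq0] : exists v, dxi D j v != 0.
  by exists (twist v); rewrite twistK.
have [dxiw0|] := eqVneq (dxi D j w) 0; last by exists w.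
by exists (xi D j w); apply: contraNneq w_neq0 => dxiw_eq0;
  rewrite -(dxi_xi j w) dxiw_eq0 dxiw0 (lin_op0 (lin_xi j)) addr0.
Qed.

End WeylModule.

Section WedgeSigns.
Variables (R : realType) (m : nat).
Implicit Types (s a b : 'I_m) (I : {set 'I_m}).

Lemma card_lt_setU1 a b I : a \notin I ->
  #|[set i in a |: I | (i < b)%N]| = ((a < b)%N + #|[set i in I | (i < b)%N]|)%N.
Proof.
move=> aI; have [ab|ba] := boolP (a < b)%N.
  have -> : [set i in a |: I | (i < b)%N] = a |: [set i in I | (i < b)%N].
    by apply/setP => i; rewrite !inE; case: eqVneq => [->|].
  by rewrite cardsU1 inE (negbTE aI).
rewrite add0n; apply: eq_card => i; rewrite !inE.
by case: eqVneq => [->|] //=; rewrite (negbTE ba) (negbTE aI).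
Qed.

Lemma wedge_coef_anticomm s s' I :
  wedge_coef R s (s' |: I) * wedge_coef R s' I
  = - (wedge_coef R s' (s |: I) * wedge_coef R s I).
Proof.
rewrite /wedge_coef !in_setU1.
have [sI|sI] := boolP (s \in I); first by rewrite orbT mul0r mulr0 oppr0.
have [s'I|s'I] := boolP (s' \in I); first by rewrite orbT mul0r mulr0 oppr0.
have [<-|ss'] := eqVneq s s'; first by rewrite /= mul0r oppr0.
rewrite /= !card_lt_setU1 // !exprD.
case: (ltngtP s s') => [||/val_inj/eqP]; last by rewrite (negbTE ss').
- by rewrite expr0 expr1 mul1r mulN1r mulNr opprK mulrC.
- by rewrite expr0 expr1 mul1r mulN1r mulNr mulrC.
Qed.

Lemma wedge_coef_setU1_sign s I :
  wedge_coef R s I * (-1) ^+ #|s |: I| = - ((-1) ^+ #|I| * wedge_coef R s I).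
Proof.
rewrite /wedge_coef; case: ifP => [_|sI]; first by rewrite mul0r mulr0 oppr0.
by rewrite cardsU1 sI exprS mulN1r mulrN mulrC.
Qed.

End WedgeSigns.

Section Weights.
Variables (R : realType) (n : nat).
Local Notation C := R[i].
Implicit Types (lam mu nu : {ffun 'I_n -> C}) (l : 'I_n).

Definition shift nu l : {ffun 'I_n -> C} := [ffun j => nu j + unitv R l j].

Lemma shiftC nu l l' : shift (shift nu l) l' = shift (shift nu l') l.
Proof. by apply/ffunP => j; rewrite !ffunE addrAC. Qed.

Lemma eq_shift nu l l' : (shift nu l == shift nu l') = (l == l').
Proof.
apply/eqP/eqP => [|-> //] /ffunP /(_ l); rewrite !ffunE eqxx => /addrI.
by case: eqVneq => // _ /eqP; rewrite oner_eq0.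
Qed.

Lemma intC_trichotomy (x : C) : ~ isIntC x \/ isNatC x \/ isNegIntC x.
Proof.
have [[[k|k] ->]|] := pselect (isIntC x); last by left.
  by right; left; exists k; rewrite -pmulrn.
by right; right; exists k; rewrite NegzE mulrNz -pmulrn.
Qed.

Lemma in_S_refl lam : in_S lam lam.
Proof.
move=> j; have [|[|]] := intC_trichotomy (lam j); [left | right; left | right; right] => //.
by split=> //; exists 0; rewrite subrr.
Qed.

Lemma in_S_shift_mid lam mu l l' : l != l' ->
  in_S lam mu -> in_S lam (shift (shift mu l) l') -> in_S lam (shift mu l).
Proof.
move=> ll' mu_in_S mu2_in_S j.
suff [->|->] : shift mu l j = mu j \/ shift mu l j = shift (shift mu l) l' j by [].
rewrite !ffunE; have [->|jl] := eqVneq j l; last by left; rewrite addr0.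
by right; rewrite (negbTE ll') addr0.
Qed.

Lemma in_S_shift lam l : lam l != -1 -> in_S lam (shift lam l).
Proof.
move=> lam_l j; rewrite !ffunE; have [->|jl] := eqVneq j l; last first.
  by rewrite addr0; apply: in_S_refl.
have [|[[k ->]|[[|k] lamlE]]] := intC_trichotomy (lam l).
- by left; split=> //; exists 1; rewrite addrAC subrr add0r.
- by right; left; split; [exists k | exists k.+1; rewrite natr1].
- by rewrite lamlE in lam_l; rewrite eqxx in lam_l.
- right; right; split; first by exists k.+1.
  by exists k; rewrite lamlE -natr1 opprD addrNK.
Qed.

Lemma in_S_m1_negint mu : in_S [ffun => -1] mu -> forall j, isNegIntC (mu j).
Proof.
move=> mu_in_S j; have := mu_in_S j; rewrite ffunE.
case=> [[[]]|[[[k /eqP]]|[_ //]]]; first by exists (-1).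
by rewrite -subr_eq0 -opprD oppr_eq0 nat1r pnatr_eq0.
Qed.

End Weights.

Section TopComponent.
Variables (R : realType) (m n : nat).

Lemma inL_top_m1 (b : basis R m n) : inL m [ffun => -1] b -> b = (setT, [ffun => -1]).
Proof.
case: b => I mu; rewrite /inL eqxx => -[/in_S_m1_negint mu_neg] /=.
rewrite (eq_bigr (fun=> -1)) => [sumE|j _]; last by rewrite ffunE.
have gap_ge0 j : 0 <= -1 - mu j.
  by have [k ->] := mu_neg j; rewrite opprK -nat1r addKr ler0n.
have gap_sum : \sum_j (-1 - mu j) = #|I|%:R - m%:R.
  rewrite sumrB (_ : \sum_j -1 = #|I|%:R + \sum_j mu j - m%:R).
    by rewrite addrAC addrK.
  by rewrite -sumE addrC addKr.
have gap_sum0 : \sum_j (-1 - mu j) = 0.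
  apply/le_anti; rewrite (sumr_ge0 _ (fun j _ => gap_ge0 j)) andbT.
  by rewrite gap_sum subr_le0 ler_nat -[X in (_ <= X)%N](card_ord m) max_card.
have -> : I = setT.
  apply/eqP; rewrite eqEcard subsetT cardsT card_ord /=.
  by move/eqP: gap_sum; rewrite gap_sum0 eq_sym subr_eq0 eqr_nat => /eqP ->.
congr (_, _); apply/ffunP => j; apply/eqP; rewrite ffunE eq_sym -subr_eq0.
by rewrite (psumr_eq0P (fun i _ => gap_ge0 i) gap_sum0).
Qed.

End TopComponent.

Section SigmaCoefficients.
Variables (R : realType) (m n : nat) (laurent : bool) (P : lmodType R[i]).
Variable D : Kdata m n P.
Hypothesis HK : is_Kmodule laurent D.
Variable lam : {ffun 'I_n -> R[i]}.
Local Notation basis := (basis R m n).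

Definition coef (t : seq (P * basis)) (b : basis) : P :=
  \sum_(x <- t | x.2 == b) x.1.

(* [sigma_lambda (u (x) e_I y(mu))] is the sum over [s] of
   [dt_term u I s (x) e_(s |: I) y(mu)] and over [l] of
   [dxi_term u I l (x) e_I y(mu + e_l)]; [tpart] and [xipart] are the
   coefficients of [e_B y(beta)] in these two parts. *)
Definition dt_term (u : P) (I : {set 'I_m}) (s : 'I_m) : P :=
  wedge_coef R s I *: dt D s u.
Definition dxi_term (u : P) (I : {set 'I_m}) (l : 'I_n) : P :=
  (-1) ^+ #|I| *: dxi D l (twist D u).

Definition tpart (v : P) (J : {set 'I_m}) (nu : {ffun 'I_n -> R[i]}) B beta : P :=
  \sum_(s <- enum 'I_m) (if (s |: J == B) && (nu == beta) then dt_term v J s else 0).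
Definition xipart (v : P) (J : {set 'I_m}) (nu : {ffun 'I_n -> R[i]}) B beta : P :=
  \sum_(l <- enum 'I_n) (if (J == B) && (shift nu l == beta) then dxi_term v J l else 0).

Lemma dt_termD u v I s : dt_term (u + v) I s = dt_term u I s + dt_term v I s.
Proof. by rewrite /dt_term (lin_opD (lin_dt HK s)) scalerDr. Qed.

Lemma dxi_termD u v I l : dxi_term (u + v) I l = dxi_term u I l + dxi_term v I l.
Proof. by rewrite /dxi_term (twistD HK) (lin_opD (lin_dxi HK l)) scalerDr. Qed.

Lemma tpartD u v J nu B beta :
  tpart (u + v) J nu B beta = tpart u J nu B beta + tpart v J nu B beta.
Proof.
rewrite /tpart -big_split; apply: eq_bigr => s _.
by case: ifP => _; rewrite /= ?addr0 ?dt_termD.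
Qed.

Lemma xipartD u v J nu B beta :
  xipart (u + v) J nu B beta = xipart u J nu B beta + xipart v J nu B beta.
Proof.
rewrite /xipart -big_split; apply: eq_bigr => l _.
by case: ifP => _; rewrite /= ?addr0 ?dxi_termD.
Qed.

Lemma sum_parity_dxi_term u (I : {set 'I_m}) l :
  \sum_(p <- [:: false; true])
     (((if p then 1 else -1) * (-1) ^+ #|I|) *: dxi D l (hcomp D p u))
  = dxi_term u I l.
Proof.
rewrite !big_cons big_nil /hcomp /dxi_term /twist addr0 mul1r mulN1r.
by rewrite !(lin_opB (lin_dxi HK l)) scaleNr addrC -scalerBr.
Qed.

Lemma coef_sigma_pure v J nu B beta :
  coef (sigma_pure D (v, (J, nu))) (B, beta) = tpart v J nu B beta + xipart v J nu B beta.
Proof.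
rewrite /coef /sigma_pure big_mkcond big_cat big_map big_allpairs_dep /=.
congr (_ + _); apply: eq_bigr => l _ /=.
rewrite /shift xpair_eqE; case: ifP => _; last by rewrite big1_eq.
exact: sum_parity_dxi_term.
Qed.

Lemma coef_sigma_pureD u v b' b :
  coef (sigma_pure D (u + v, b')) b
  = coef (sigma_pure D (u, b')) b + coef (sigma_pure D (v, b')) b.
Proof.
case: b' b => [J nu] [B beta].
by rewrite !coef_sigma_pure tpartD xipartD addrACA.
Qed.

Lemma big_sigma (g : P * basis -> P) t :
  \sum_(y <- sigma D lam t) g y
  = \sum_(x <- t | validb lam x.2) \sum_(y <- sigma_pure D x) g y.
Proof. by rewrite /sigma big_flatten /= big_map big_filter. Qed.

Lemma coef_sigma t b :
  coef (sigma D lam t) b = \sum_(x <- t | validb lam x.2) coef (sigma_pure D x) b.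
Proof.
by rewrite /coef big_mkcond big_sigma; apply: eq_bigr => x _; rewrite [RHS]big_mkcond.
Qed.

Lemma coef_sigma_sigma_pure u (I : {set 'I_m}) mu B beta : in_S lam mu ->
  coef (sigma D lam (sigma_pure D (u, (I, mu)))) (B, beta) =
    \sum_(s <- enum 'I_m) (tpart (dt_term u I s) (s |: I) mu B beta
                           + xipart (dt_term u I s) (s |: I) mu B beta)
  + \sum_(l <- enum 'I_n)
      ((if validb lam (I, shift mu l)
        then tpart (dxi_term u I l) I (shift mu l) B beta else 0)
     + (if validb lam (I, shift mu l)
        then xipart (dxi_term u I l) I (shift mu l) B beta else 0)).
Proof.
move=> mu_in_S.
rewrite coef_sigma /sigma_pure big_mkcond big_cat big_map big_allpairs_dep /=.
congr (_ + _); apply: eq_bigr => i _.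
  by rewrite /validb /= asboolT // coef_sigma_pure.
case: ifP => _; last by rewrite big1_eq addr0.
rewrite -coef_sigma_pure -sum_parity_dxi_term !big_cons !big_nil !addr0.
by rewrite coef_sigma_pureD.
Qed.

Lemma dxi_term_dxi_term u I l l' :
  dxi_term (dxi_term u I l) I l' = - dxi D l' (dxi D l u).
Proof.
rewrite /dxi_term (twistZ HK) (twist_dxi HK) (twistK HK).
rewrite (lin_opZ (lin_dxi HK l')) (lin_opN (lin_dxi HK l')).
by rewrite scalerA -expr2 sqrr_sign scale1r.
Qed.

Lemma dxi_term_dt_term u I s l :
  dxi_term (dt_term u I s) (s |: I) l + dt_term (dxi_term u I l) I s = 0.
Proof.
rewrite /dxi_term /dt_term (twistZ HK) (twist_dt HK) (lin_opZ (lin_dxi HK l)).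
rewrite (lin_opZ (lin_dt HK s)) -(dt_dxi HK) !scalerA -scalerDl.
by rewrite [_ * wedge_coef _ _ _]mulrC wedge_coef_setU1_sign mulrC addNr scale0r.
Qed.

Lemma sum_tpart_tpart_eq0 u I mu B beta :
  \sum_(s <- enum 'I_m) tpart (dt_term u I s) (s |: I) mu B beta = 0.
Proof.
rewrite /tpart; apply: sum_antisym_eq0 => s s'.
rewrite setUCA; case: ifP => _; last by rewrite oppr0.
rewrite /dt_term !(lin_opZ (lin_dt HK _)) !scalerA wedge_coef_anticomm scaleNr.
by rewrite (dt_comm HK s).
Qed.

Lemma sum_xipart_xipart_eq0 u I mu B beta : in_S lam mu -> in_S lam beta ->
  \sum_(l <- enum 'I_n) (if validb lam (I, shift mu l)
     then xipart (dxi_term u I l) I (shift mu l) B beta else 0) = 0.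
Proof.
move=> mu_in_S beta_in_S.
pose G l l' := if [&& validb lam (I, shift mu l), I == B & shift (shift mu l) l' == beta]
               then - dxi D l' (dxi D l u) else 0.
rewrite (eq_bigr (fun l => \sum_(l' <- enum 'I_n) G l l')) => [|l _]; last first.
  rewrite /xipart /G; case: ifP => _ /=; last by rewrite big1_eq.
  by apply: eq_bigr => l' _; rewrite dxi_term_dxi_term.
apply: sum_antisym_eq0 => l l'; rewrite /G shiftC.
have [<-|ll'] := eqVneq l l'; first by rewrite (dxi_dxi HK) oppr0 !if_same oppr0.
case: (boolP ((I == B) && _)) => [/andP[_ /eqP mu2E]|]; last by rewrite !andbF oppr0.
have valid_l l1 l2 : l1 != l2 -> shift (shift mu l1) l2 = beta ->
    validb lam (I, shift mu l1).
  by move=> l12 betaE; apply/asboolP/(in_S_shift_mid l12 mu_in_S); rewrite betaE.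
rewrite (valid_l l l') // (valid_l l' l) 1?eq_sym // 1?shiftC //.
by rewrite (dxi_anticomm HK l') opprK.
Qed.

Lemma sum_xipart_tpart_eq0 u I mu B beta : in_S lam beta ->
  \sum_(s <- enum 'I_m) xipart (dt_term u I s) (s |: I) mu B beta
  + \sum_(l <- enum 'I_n) (if validb lam (I, shift mu l)
       then tpart (dxi_term u I l) I (shift mu l) B beta else 0) = 0.
Proof.
move=> beta_in_S.
rewrite [X in _ + X](eq_bigr (fun l => tpart (dxi_term u I l) I (shift mu l) B beta)).
  rewrite /xipart /tpart [X in _ + X]exchange_big -big_split /=.
  apply: big1 => s _; rewrite -big_split; apply: big1 => l _ /=.
  by case: ifP => _; rewrite ?dxi_term_dt_term ?addr0.
move=> l _; case: ifP => // not_valid; apply/esym/big1 => s _.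
by case: ifP => // /andP[_ /eqP muE]; rewrite /validb muE asboolT in not_valid.
Qed.

Lemma coef_sigma_sigma_pure_eq0 x B beta : validb lam x.2 -> in_S lam beta ->
  coef (sigma D lam (sigma_pure D x)) (B, beta) = 0.
Proof.
case: x => u [I mu] /asboolP mu_in_S beta_in_S.
rewrite coef_sigma_sigma_pure // !big_split /= sum_tpart_tpart_eq0.
by rewrite sum_xipart_xipart_eq0 // add0r addr0 sum_xipart_tpart_eq0.
Qed.

Lemma sigma_sigma_eq0 t : tzero lam (sigma D lam (sigma D lam t)).
Proof.
move=> [B beta] /asboolP beta_in_S.
change (coef (sigma D lam (sigma D lam t)) (B, beta) = 0).
rewrite coef_sigma big_mkcond big_sigma; apply: big1 => x x_valid.
by rewrite -big_mkcond -coef_sigma coef_sigma_sigma_pure_eq0.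
Qed.

End SigmaCoefficients.

Section SigmaOnL.
Variables (R : realType) (m n : nat) (laurent : bool) (P : lmodType R[i]).
Variable D : Kdata m n P.
Hypothesis HK : is_Kmodule laurent D.
Hypothesis P_neq0 : exists w : P, w != 0.
Local Notation basis := (basis R m n).

Lemma tpart_setT v nu B beta : tpart D v setT nu B beta = 0.
Proof. by apply: big1 => s _; rewrite /dt_term /wedge_coef in_setT scale0r if_same. Qed.

Lemma coef_sigma_seq1 lam u (b' b : basis) : validb lam b' ->
  coef (sigma D lam [:: (u, b')]) b = coef (sigma_pure D (u, b')) b.
Proof. by move=> b'_valid; rewrite coef_sigma big_cons big_nil b'_valid addr0. Qed.

Lemma sigma_L_m1_eq0 t : (forall x, x \in t -> inL m [ffun => -1] x.2) ->
  tzero [ffun => -1] (sigma D [ffun => -1] t).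
Proof.
move=> t_in_L [B beta] /asboolP beta_in_S.
change (coef (sigma D [ffun => -1] t) (B, beta) = 0).
rewrite coef_sigma; apply: big1_seq => -[u b'] /andP[_ /t_in_L /inL_top_m1 /= ->].
rewrite (coef_sigma_pure HK) tpart_setT add0r; apply: big1 => l _.
case: ifP => // /andP[_ /eqP betaE]; have := in_S_m1_negint beta_in_S l.
rewrite -betaE !ffunE eqxx addNr => -[k /eqP].
by rewrite eq_sym oppr_eq0 pnatr_eq0.
Qed.

Lemma sigma_L_top_neq0 lam : lam != [ffun => -1] ->
  exists2 t, (forall x, x \in t -> inL m lam x.2) & ~ tzero lam (sigma D lam t).
Proof.
move=> lam_neq; have [l lam_l] : exists l, lam l != -1.
  apply/existsP; apply: contraNT lam_neq => /existsPn all_m1.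
  by apply/eqP/ffunP => j; rewrite ffunE; apply/eqP/negbNE/all_m1.
have [u dxi_u] := exists_dxi_twist_neq0 HK l P_neq0.
have lam_valid : validb lam ((setT, lam) : basis) by apply/asboolP; apply: in_S_refl.
exists [:: (u, (setT, lam))] => [x|sigma0].
  rewrite mem_seq1 => /eqP -> /=; rewrite /inL eqxx cardsT card_ord.
  by split=> //; apply: in_S_refl.
have : coef (sigma D lam [:: (u, (setT, lam))]) (setT, shift lam l) = 0.
  by apply: sigma0; apply/asboolP/in_S_shift.
rewrite coef_sigma_seq1 // (coef_sigma_pure HK) tpart_setT add0r.
rewrite /xipart (bigD1_seq l) ?mem_enum ?enum_uniq //= !eqxx big1_seq => [|l'].
  by move/eqP; rewrite addr0 /dxi_term scaler_eq0 signr_eq0 (negbTE dxi_u).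
by case/andP=> l'l _; rewrite eq_shift (negbTE l'l).
Qed.

Lemma sigma_L_low_neq0 r : (r < m)%N ->
  exists2 t, (forall x, x \in t -> inL r [ffun => 0] x.2)
           & ~ tzero [ffun => 0] (sigma D [ffun => 0] t).
Proof.
move=> rm; set lam : {ffun 'I_n -> R[i]} := [ffun => 0].
pose I := [set widen_ord (ltnW rm) i | i : 'I_r]; pose s : 'I_m := Ordinal rm.
have sI : s \notin I.
  by apply/imsetP => -[i _ /(congr1 val) /= ri]; move: (ltn_ord i); rewrite -ri ltnn.
have [u dt_u] := exists_dt_neq0 HK s P_neq0.
have lam_valid : validb lam ((I, lam) : basis) by apply/asboolP; apply: in_S_refl.
exists [:: (u, (I, lam))] => [x|sigma0].
  rewrite mem_seq1 => /eqP -> /=; rewrite /inL (ltn_eqF rm).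
  exists (fun=> 0%N); split=> [j|]; first by rewrite ffunE.
  by rewrite big1_eq addn0 card_imset ?card_ord // => a b [] /val_inj.
have : coef (sigma D lam [:: (u, (I, lam))]) (s |: I, lam) = 0 by apply: sigma0.
rewrite coef_sigma_seq1 // (coef_sigma_pure HK).
have I_neq_sI : (I == s |: I) = false.
  by apply/negbTE/(contraNneq _ sI) => ->; apply: setU11.
rewrite [xipart _ _ _ _ _ _]big1 => [|l _]; last by rewrite I_neq_sI.
rewrite addr0 /tpart (bigD1_seq s) ?mem_enum ?enum_uniq //= !eqxx big1_seq => [|s'].
  move/eqP; rewrite addr0 /dt_term /wedge_coef (negbTE sI).
  by rewrite scaler_eq0 signr_eq0 (negbTE dt_u).
by case/andP=> s's _; rewrite setU1_eq_notin // (negbTE s's).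
Qed.

End SigmaOnL.

Theorem lemma4p2 (R : realType) (m n : nat) (Hmn : (0 < m + n)%N)
    (laurent : bool) (P : lmodType R[i]) (D : Kdata m n P)
    (HP : simple_Kmodule laurent D) (lam : {ffun 'I_n -> R[i]}) :
  (forall s : seq (P * basis R m n), tzero lam (sigma D lam (sigma D lam s)))
  /\
  (forall r : nat, (r <= m)%N -> (r != m -> lam = [ffun => 0]) ->
     ((forall s : seq (P * basis R m n),
          (forall x, x \in s -> inL r lam x.2) -> tzero lam (sigma D lam s))
      <-> (r = m /\ lam = [ffun => -1]))).
Proof.
case: HP => HK P_neq0 _; split=> [t|r rm lam0]; first exact: (sigma_sigma_eq0 HK t).
split=> [sigma_L0|[-> ->]]; last exact: (sigma_L_m1_eq0 HK).
have [rm'|r_neq_m] := eqVneq r m.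
  split=> //; apply/eqP; apply: contraT => lam_neq; rewrite rm' in sigma_L0.
  by have [t t_in_L []] := sigma_L_top_neq0 HK P_neq0 lam_neq; apply: sigma_L0.
rewrite lam0 // in sigma_L0; have r_lt_m : (r < m)%N by rewrite ltn_neqAle r_neq_m.
by have [t t_in_L []] := sigma_L_low_neq0 HK P_neq0 r_lt_m; apply: sigma_L0.
Qed.
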